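(* Let $T>0$ and let $\Gamma:\Delta_T\to\mathbb{R}_+$ be a double kernel that preserves nonnegativity on $[0,T]$ and such that $\Gamma(s,s)=\gamma>0$ is constant for $s\in[0,T]$. Then the double kernel $\tilde\Gamma(t,s)=\Gamma(T-s,T-t)$, $(t,s)\in\Delta_T$, preserves nonnegativity on $[0,T]$.
   Context: $\Delta_T=\{(t,s):0\le s\le t\le T\}$. $\Gamma:\Delta_T\to\mathbb{R}_+$ preserves nonnegativity on $[0,T]$ if for any $K\in\mathbb{N}^*$, $x_1,\dots,x_K\in\mathbb{R}$ and $0\le t_1<\dots<t_K<T$ with $\sum_{k'=1}^kx_{k'}\Gamma(t_k,t_{k'})\ge0$ for all $k$, one has $\sum_{k:t_k\le t}x_k\Gamma(t,t_k)\ge0$ for all $t\in[0,T]$. *)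

From HB Require Import structures.
From mathcomp Require Import all_boot all_order all_algebra.
From mathcomp Require Import reals.
Set Implicit Arguments. Unset Strict Implicit. Unset Printing Implicit Defensive.
Import Order.TTheory GRing.Theory Num.Theory.
Local Open Scope ring_scope.

(* A double kernel is modelled as a function G : R -> R -> R; only its values
   on Delta_T = {(t,s) : 0 <= s <= t <= T} matter. *)

Definition nonneg_on_Delta {R : realType} (T : R) (G : R -> R -> R) : Prop :=
  forall t s : R, 0 <= s -> s <= t -> t <= T -> 0 <= G t s.

(* Preservation of nonnegativity on [0,T]. Indices k = 1..K of the paper are
   represented by k : 'I_K (i.e. 0..K-1). *)
Definition preserves_nonneg {R : realType} (T : R) (G : R -> R -> R) : Prop :=
  forall (K : nat) (x : 'I_K -> R) (tk : 'I_K -> R),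
    (0 < K)%N ->
    (forall i j : 'I_K, (i < j)%N -> tk i < tk j) ->
    (forall i : 'I_K, 0 <= tk i /\ tk i < T) ->
    (forall k : 'I_K, 0 <= \sum_(k' < K | (k' <= k)%N) x k' * G (tk k) (tk k')) ->
    forall t : R, 0 <= t -> t <= T ->
      0 <= \sum_(k < K | tk k <= t) x k * G t (tk k).

(* Write s_0 < ... < s_(j-1) for the points t_k <= t and s_j = t.  Running
   time backwards, v_a = T - s_(j-a) is increasing, and the preservation
   property of G together with its constant diagonal gamma > 0 produces
   weights rho_0 = 1 and rho_1, ..., rho_j <= 0 such that
   sum_(a <= b) rho_a G(v_b, v_a) = 0 for every b >= 1: rho_b <= 0 because the
   previous partial sums are nonnegative at v_b by preservation.  Pairing the
   hypotheses with these weights and exchanging the two sums shows that the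
   target sum equals -sum_(b >= 1) rho_b (hypothesis at s_(j-b)) >= 0. *)

From mathcomp Require Import all_boot all_order all_algebra.
From mathcomp Require Import reals.
From mathcomp Require Import zify lra.
Import Order.TTheory GRing.Theory Num.Theory.
Local Open Scope ring_scope.

Lemma big_ord_widen_prefix {V : nmodType} {n} m (F' : nat -> V)
    {P : pred 'I_n} {F : 'I_n -> V} :
  (m <= n)%N -> (forall k : 'I_n, P k = (k < m)%N) ->
  (forall k : 'I_n, (k < m)%N -> F k = F' k) ->
  \sum_(k < n | P k) F k = \sum_(k < m) F' k.
Proof.
move=> le_mn PE FE; rewrite (big_ord_widen_cond _ xpredT F' le_mn).
by apply: eq_big => k; rewrite PE // => /FE.
Qed.

Lemma big_ord_rev_tail {V : nmodType} j k (F : nat -> V) : (k <= j)%N ->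
  \sum_(i < j.+1 | (k <= i)%N) F (j - i)%N = \sum_(a < (j - k).+1) F a.
Proof.
move=> le_kj; rewrite (reindex_inj rev_ord_inj) /=.
rewrite (big_ord_widen_cond _ xpredT F (_ : (j - k).+1 <= j.+1)%N); last lia.
apply: eq_big => a; first by have := ltn_ord a; rewrite /= subSS; lia.
by have := ltn_ord a; rewrite subSS => lt_aj _; congr F; lia.
Qed.

Lemma exchange_triangular_sum {V : comPzRingType} m n (r x : nat -> V)
    (B : nat -> nat -> V) :
  \sum_(i < m) r i * \sum_(k < n | (k <= i)%N) x k * B i k
  = \sum_(k < n) x k * \sum_(i < m | (k <= i)%N) r i * B i k.
Proof.
under eq_bigr do rewrite big_distrr.
rewrite (exchange_big_dep xpredT) //=; apply: eq_bigr => k _.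
by rewrite big_distrr; apply: eq_bigr => i _; rewrite mulrCA.
Qed.

Lemma ord_downward_closed_prefix n (P : pred 'I_n) :
  (forall a b : 'I_n, (a <= b)%N -> P b -> P a) ->
  exists2 j, (j <= n)%N & forall k : 'I_n, P k = (k < j)%N.
Proof.
move=> Pdown; exists (\max_(k | P k) k.+1)%N.
  by apply/bigmax_leqP => k _; exact: ltn_ord.
move=> k; apply/idP/idP => [Pk|].
  exact: (@leq_bigmax_cond _ P (fun k : 'I_n => k.+1) k Pk).
apply: contraTT => notPk; rewrite -leqNgt; apply/bigmax_leqP => k1 Pk1.
by rewrite ltnNge; apply: contra notPk => /Pdown; apply.
Qed.

Section PreservingKernel.
Context {R : realType} {T : R} {G : R -> R -> R}.
Hypothesis preservesG : preserves_nonneg T G.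

Lemma preserves_nonneg_next n (u x : nat -> R) :
  (forall a b, (a < b <= n.+1)%N -> u a < u b) -> 0 <= u 0%N -> u n.+1 <= T ->
  (forall k, (k <= n)%N -> 0 <= \sum_(i < k.+1) x i * G (u k) (u i)) ->
  0 <= \sum_(i < n.+1) x i * G (u n.+1) (u i).
Proof.
move=> u_incr u0_ge0 un1_le sums_ge0.
have u_lt_un1 (i : 'I_n.+1) : u i < u n.+1 by apply: u_incr; rewrite ltn_ord /=.
have u_ge0 a : (a <= n.+1)%N -> 0 <= u a.
  case: a => [//|a] le_a.
  exact: le_trans u0_ge0 (ltW (u_incr 0%N a.+1 le_a)).
have -> : \sum_(i < n.+1) x i * G (u n.+1) (u i)
    = \sum_(i < n.+1 | u i <= u n.+1) x i * G (u n.+1) (u i).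
  by apply: eq_bigl => i; rewrite ltW.
apply: (preservesG n.+1 (x \o val) (u \o val)) => //.
- by move=> a b ab; apply: u_incr; rewrite ab /= ltnW.
- move=> i /=; split; first by apply: u_ge0; rewrite ltnW.
  exact: lt_le_trans (u_lt_un1 i) un1_le.
- move=> k.
  rewrite (big_ord_widen_prefix k.+1 (fun i => x i * G (u k) (u i))) //.
  by apply: sums_ge0; rewrite -ltnS.
- exact: u_ge0.
Qed.

Context {gamma : R}.
Hypotheses (gamma_gt0 : 0 < gamma)
  (diagG : forall s : R, 0 <= s -> s <= T -> G s s = gamma).

Lemma annihilating_weights n (v : nat -> R) :
  (forall a b, (a < b <= n)%N -> v a < v b) -> 0 <= v 0%N -> v n <= T ->
  exists2 rho : nat -> R, rho 0%N = 1 & forall b, (0 < b <= n)%N ->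
    rho b <= 0 /\ \sum_(a < b.+1) rho a * G (v b) (v a) = 0.
Proof.
elim: n => [|n IHn] v_incr v0_ge0 vn_le.
  by exists (fun=> 1) => // -[|b].
have v_incr' a b : (a < b <= n)%N -> v a < v b.
  by case/andP=> ab bn; apply: v_incr; rewrite ab leqW.
have vn_lt : v n < v n.+1 by apply: v_incr; rewrite ltnSn.
have vn1_ge0 : 0 <= v n.+1 := le_trans v0_ge0 (ltW (v_incr 0%N n.+1 (leqnn _))).
have [rho rho0 rhoP] := IHn v_incr' v0_ge0 (le_trans (ltW vn_lt) vn_le).
set S := \sum_(a < n.+1) rho a * G (v n.+1) (v a).
have S_ge0 : 0 <= S.
  apply: preserves_nonneg_next => // -[_|k le_kn].
    have v0_le : v 0%N <= T := le_trans (ltW (v_incr 0%N n.+1 (leqnn _))) vn_le.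
    by rewrite big_ord1 rho0 mul1r diagG // ltW.
  by rewrite (rhoP k.+1 le_kn).2.
exists (fun a => if a == n.+1 then - S / gamma else rho a) => //.
move=> b /andP[b_gt0]; rewrite leq_eqVlt => /predU1P[->|lt_bn].
  rewrite eqxx; split; first by rewrite mulNr oppr_le0 divr_ge0 // ltW.
  rewrite big_ord_recr /= eqxx diagG // mulfVK ?gt_eqF //.
  apply/eqP; rewrite subr_eq0; apply/eqP.
  by apply: eq_bigr => a _; rewrite ltn_eqF.
have /rhoP[rho_le sum0] : (0 < b <= n)%N by rewrite b_gt0.
rewrite ltn_eqF //; split => //; rewrite -[RHS]sum0.
by apply: eq_bigr => a _; rewrite ltn_eqF // (leq_trans (ltn_ord a)).
Qed.

Lemma reflected_sum_ge0 j (s x : nat -> R) :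
  (forall a b, (a < b <= j)%N -> s a < s b) -> 0 <= s 0%N -> s j <= T ->
  (forall i, (i < j)%N -> 0 <= \sum_(k < i.+1) x k * G (T - s k) (T - s i)) ->
  0 <= \sum_(k < j) x k * G (T - s k) (T - s j).
Proof.
move=> s_incr s0_ge0 sj_le sums_ge0.
pose v a := T - s (j - a)%N.
have v_incr a b : (a < b <= j)%N -> v a < v b.
  move=> /andP[ab bj]; have : s (j - b)%N < s (j - a)%N by apply: s_incr; lia.
  by rewrite /v; lra.
have v0_ge0 : 0 <= v 0%N by rewrite /v subn0; lra.
have vj_le : v j <= T by rewrite /v subnn; lra.
have [rho rho0 rhoP] := @annihilating_weights j v v_incr v0_ge0 vj_le.
pose r i := rho (j - i)%N.
have exchange := exchange_triangular_sum j.+1 j r x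
  (fun i k => G (T - s k) (T - s i)).
have inner0 (k : 'I_j) :
    \sum_(i < j.+1 | (k <= i)%N) r i * G (T - s k) (T - s i) = 0.
  have lt_kj := ltn_ord k.
  transitivity (\sum_(i < j.+1 | (k <= i)%N)
                 (fun a => rho a * G (v (j - k)%N) (v a)) (j - i)%N).
    apply: eq_bigr => i _; have := ltn_ord i; rewrite ltnS => le_ij.
    by rewrite /v /r !subKn // ltnW.
  rewrite (@big_ord_rev_tail _ j k (fun a => rho a * G (v (j - k)%N) (v a))).
    by apply: (rhoP _ _).2; lia.
  exact: ltnW.
rewrite [X in _ = X]big1 in exchange; last by move=> k _; rewrite inner0 mulr0.
have rj : r j = 1 by rewrite /r subnn.
rewrite big_ord_recr /= rj mul1r [X in _ + X = _](eq_bigl xpredT) in exchange;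
  last by move=> k; rewrite /= ltnW.
have : \sum_(i < j) r i *
         \sum_(k < j | (k <= i)%N) x k * G (T - s k) (T - s i) <= 0.
  apply: sumr_le0 => i _; have lt_ij := ltn_ord i.
  apply: mulr_le0_ge0; first by apply: (rhoP _ _).1; lia.
  rewrite (big_ord_widen_prefix i.+1 (fun k => x k * G (T - s k) (T - s i))) //.
  exact: sums_ge0.
lra.
Qed.

Lemma reflected_sum_off_grid_ge0 K (x tk : 'I_K -> R) (t : R) :
  (0 < K)%N -> (forall a b : 'I_K, (a < b)%N -> tk a < tk b) ->
  (forall k, 0 <= tk k) ->
  (forall k : 'I_K,
     0 <= \sum_(k' < K | (k' <= k)%N) x k' * G (T - tk k') (T - tk k)) ->
  (forall k, tk k != t) -> 0 <= t -> t <= T ->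
  0 <= \sum_(k < K | tk k <= t) x k * G (T - tk k) (T - t).
Proof.
move=> K_gt0 tk_incr tk_ge0 sums_ge0 t_notin t_ge0 t_le.
have [j le_jK tk_le_t] :
    exists2 j, (j <= K)%N & forall k : 'I_K, (tk k <= t) = (k < j)%N.
  apply: ord_downward_closed_prefix => a b le_ab; apply: le_trans.
  by rewrite (le_mono tk_incr).
pose k0 := Ordinal K_gt0.
pose s i := if (i < j)%N then tk (insubd k0 i) else t.
pose x' i := x (insubd k0 i).
have s_tk (k : 'I_K) : (k < j)%N -> s k = tk k.
  by move=> lt_kj; rewrite /s lt_kj valKd.
have x'_x (k : 'I_K) : x' k = x k by rewrite /x' valKd.
have s_incr a b : (a < b <= j)%N -> s a < s b.
  move=> /andP[lt_ab le_bj]; have lt_aj : (a < j)%N := leq_trans lt_ab le_bj.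
  have lt_aK : (a < K)%N := leq_trans lt_aj le_jK.
  rewrite /s lt_aj; case: ltnP => [lt_bj|_].
    by apply: tk_incr; rewrite !insubdK //; exact: leq_trans lt_bj le_jK.
  by rewrite lt_neqAle t_notin tk_le_t insubdK.
have s0_ge0 : 0 <= s 0%N by rewrite /s; case: ifP.
have sj : s j = t by rewrite /s ltnn.
have sums'_ge0 i : (i < j)%N ->
    0 <= \sum_(k < i.+1) x' k * G (T - s k) (T - s i).
  move=> lt_ij; have lt_iK := leq_trans lt_ij le_jK.
  have := sums_ge0 (insubd k0 i).
  rewrite (big_ord_widen_prefix i.+1
             (fun k => x' k * G (T - s k) (T - s i))) //.
  - by move=> k; rewrite insubdK.
  - by move=> k lt_ki; rewrite x'_x s_tk ?(leq_trans lt_ki) // /s lt_ij.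
rewrite (big_ord_widen_prefix j (fun k => x' k * G (T - s k) (T - s j))) //.
  by apply: reflected_sum_ge0 => //; rewrite sj.
by move=> k lt_kj; rewrite x'_x s_tk // sj.
Qed.

End PreservingKernel.

Theorem corollaryC (R : realType) (T : R) (G : R -> R -> R) (gamma : R) :
  0 < T ->
  nonneg_on_Delta T G ->
  preserves_nonneg T G ->
  0 < gamma ->
  (forall s : R, 0 <= s -> s <= T -> G s s = gamma) ->
  preserves_nonneg T (fun t s => G (T - s) (T - t)).
Proof.
move=> _ _ preservesG gamma_gt0 diagG K x tk K_gt0 tk_incr tk_range sums_ge0 t.
have [/existsP[k /eqP <-] _ _|/existsPn t_notin] := boolP [exists k, tk k == t].
  rewrite (eq_bigl (fun k' : 'I_K => (k' <= k)%N)) => [|k' /=].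
    exact: sums_ge0.
  exact: (le_mono tk_incr).
apply: (reflected_sum_off_grid_ge0 preservesG gamma_gt0 diagG) => // k.
exact: (tk_range k).1.
Qed.
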